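(* Let $D$ be a Hadamard plan of index $n$, let $p$ be a prime with $p\equiv1\pmod n$, and let $F$ be the periodic codebook of length $p$ from $D$. Then for $s\in\mathbb F_p$, \[\sum_{f\in F}P_{f,f}(s)=\begin{cases}(n-1)(p-1)&s=0,\\ 1-n&s\ne0,\end{cases}\] so that $\sum_{s\in\mathbb F_p^*}\left|\sum_{f\in F}P_{f,f}(s)\right|^2=(p-1)(n-1)^2$, $\sum_{s\in\mathbb F_p}\left|\sum_{f\in F}P_{f,f}(s)\right|^2=p(p-1)(n-1)^2$, and $\mathrm{PCDF}(F)=p/(p-1)$.
   Context: For periodic sequences $f,g:\mathbb Z/\ell\mathbb Z\to\mathbb C$ and $s\in\mathbb Z/\ell\mathbb Z$, the periodic crosscorrelation is $P_{f,g}(s)=\sum_{j\in\mathbb Z/\ell\mathbb Z}f_{j+s}\overline{g_j}$. For nonzero $f,g$, $\mathrm{PCDF}(f,g)=\sum_{s}|P_{f,g}(s)|^2/(P_{f,f}(0)P_{g,g}(0))$, and for a finite set $F$ of such sequences of common length, $\mathrm{PCDF}(F)=|F|^{-2}\sum_{f,g\in F}\mathrm{PCDF}(f,g)$. For each prime $p$, $\alpha_p$ is a fixed primitive element of $\mathbb F_p$ and $\mathbb F_p^{*n}$ is the subgroup of $n$th powers. A cyclotomic pattern of index $n$ is $d:\mathbb Z/n\mathbb Z\to\mathbb C$; the periodic sequence of length $p$ from $d$ has $f_0=0$, $f_h=d_k$ for $h\in\alpha_p^k\mathbb F_p^{*n}$. The periodic codebook of length $p$ from a set $D$ of patterns is the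 set of periodic sequences of length $p$ from the patterns in $D$. A Hadamard plan of index $n$ is a set of exactly $n-1$ cyclotomic patterns of index $n$ that are unimodular (entries of modulus $1$), balanced (entries sum to $0$), and pairwise orthogonal in $\mathbb C^n$. *)

From mathcomp Require Import all_boot all_order all_algebra all_field.
Set Implicit Arguments. Unset Strict Implicit. Unset Printing Implicit Defensive.
Import Order.TTheory GRing.Theory Num.Theory.
Local Open Scope ring_scope.

Definition pseq (p : nat) := {ffun 'F_p -> algC}.

Definition pcorr (p : nat) (f g : pseq p) (s : 'F_p) : algC :=
  \sum_(j : 'F_p) f (j + s) * Num.conj (g j).

Definition PCDF2 (p : nat) (f g : pseq p) : algC :=
  (\sum_(s : 'F_p) `|pcorr f g s| ^+ 2) / (pcorr f f 0 * pcorr g g 0).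

(* PCDF of a finite set F of sequences (given as a duplicate-free list) *)
Definition PCDF (p : nat) (F : seq (pseq p)) : algC :=
  (size F)%:R ^- 2 * \sum_(f <- F) \sum_(g <- F) PCDF2 f g.

Definition pattern (n : nat) := {ffun 'I_n -> algC}.

Definition cyc_class (p n : nat) (alpha : 'F_p) (h : 'F_p) : option 'I_n :=
  [pick k : 'I_n | [exists y : 'F_p, (y != 0) && (h == alpha ^+ k * y ^+ n)]].

Definition seq_of_pattern (p n : nat) (alpha : 'F_p) (d : pattern n) : pseq p :=
  [ffun h : 'F_p => if h == 0 then 0 else
     match cyc_class n alpha h with Some k => d k | None => 0 end].

Definition codebook (p n : nat) (alpha : 'F_p) (D : seq (pattern n)) : seq (pseq p) :=
  undup [seq seq_of_pattern alpha d | d <- D].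

Definition unimodular (n : nat) (d : pattern n) : Prop := forall k, `|d k| = 1.
Definition balanced (n : nat) (d : pattern n) : Prop := \sum_k d k = 0.
Definition orthogonal (n : nat) (d e : pattern n) : Prop :=
  \sum_k d k * Num.conj (e k) = 0.

Definition hadamard_plan (n : nat) (D : seq (pattern n)) : Prop :=
  [/\ uniq D, size D = n.-1,
      (forall d, d \in D -> unimodular d /\ balanced d)
    & (forall d e, d \in D -> e \in D -> d != e -> orthogonal d e)].

From mathcomp Require Import all_boot all_order all_algebra all_field.
From mathcomp Require Import ring.
Import Order.TTheory GRing.Theory Num.Theory.
Set Implicit Arguments. Unset Strict Implicit. Unset Printing Implicit Defensive.
Local Open Scope ring_scope.

(* Adjoining the all-ones row to a Hadamard plan of index n gives an n x n
   matrix whose rows are orthogonal of squared norm n; hence its columns are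
   orthogonal as well, i.e. sum_(d in D) d_k conj(d_l) = n [k = l] - 1.
   Summing the correlations over the codebook therefore gives
   sum_f P_(f,f)(s) = sum_(j, j + s <> 0) (n [j + s ~ j] - 1), where ~ means
   "same cyclotomic class".  For s = 0 each of the p - 1 terms is n - 1.  For
   s <> 0, j |-> (j + s) / j maps these j bijectively onto F_p^* \ {1}, and
   j + s ~ j iff (j + s) / j lies in the class of 1, which has (p - 1) / n
   elements; this yields n ((p - 1) / n - 1) - (p - 2) = 1 - n.  Finally
   sum_(f,g) sum_s |P_(f,g)(s)|^2 = sum_s |sum_f P_(f,f)(s)|^2 and every
   sequence has energy p - 1, which gives the PCDF. *)

Lemma expf_card_pred (F : finFieldType) (x : F) : x != 0 -> x ^+ #|F|.-1 = 1.
Proof.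
move=> x_nz; apply: (mulfI x_nz).
by rewrite -exprS (ltn_predK (finNzRing_gt1 F)) expf_card mulr1.
Qed.

Lemma sum_nonzero_const (F : finFieldType) (V : nmodType) (x : V) :
  \sum_(j : F | j != 0) x = x *+ #|F|.-1.
Proof. by rewrite (sumr_const (predC1 0)) cardC1. Qed.

Lemma sum_shift_div (F : finFieldType) (V : nmodType) (G : F -> V) (s : F) :
  s != 0 ->
  \sum_(j | (j != 0) && (j + s != 0)) G ((j + s) / j) =
  \sum_(t | (t != 0) && (t != 1)) G t.
Proof.
move=> s_nz; symmetry.
rewrite (reindex_onto (fun j => (j + s) / j) (fun t => s / (t - 1))) /=; last first.
  move=> t /andP[t_nz t_neq1]; have t1_nz : t - 1 != 0 by rewrite subr_eq0.
  by field; rewrite s_nz t1_nz.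
apply: eq_bigl => j; have [-> | j_nz] := eqVneq j 0.
  by rewrite invr0 mulr0 eqxx.
have [js0 | js_nz] := eqVneq (j + s) 0; first by rewrite js0 mul0r eqxx.
have shift : (j + s) / j - 1 = s / j by field; rewrite j_nz.
have -> : s / ((j + s) / j - 1) = j by rewrite shift; field; rewrite j_nz s_nz.
have -> : ((j + s) / j == 1) = false.
  by rewrite -subr_eq0 shift mulf_eq0 invr_eq0 (negbTE s_nz) (negbTE j_nz).
by rewrite mulf_neq0 ?invr_eq0 // eqxx.
Qed.

Section Correlation.

Variable p : nat.

Lemma sum_pcorr_sqr (f g : pseq p) :
  \sum_s `|pcorr f g s| ^+ 2 = \sum_t pcorr f f t * (pcorr g g t)^*.
Proof.
have pcorr_shift (h : pseq p) t i :
    \sum_s h (i + t + s) * (h (i + s))^* = pcorr h h t.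
  by rewrite /pcorr [RHS](reindex_inj (addrI i)); apply: eq_bigr => s _; rewrite addrAC.
transitivity (\sum_s \sum_i \sum_t
    (f (i + t + s) * (f (i + s))^*) * ((g (i + t))^* * g i)).
  apply: eq_bigr => s _; rewrite normCK /pcorr rmorph_sum mulr_sumr.
  apply: eq_bigr => i _; rewrite rmorphM /= conjCK mulr_suml (reindex_inj (addrI i)).
  by apply: eq_bigr => t _; rewrite mulrACA.
rewrite exchange_big; under eq_bigr do rewrite exchange_big; rewrite exchange_big /=.
apply: eq_bigr => t _; rewrite [pcorr g g t]/pcorr rmorph_sum mulr_sumr.
by apply: eq_bigr => i _; rewrite -mulr_suml pcorr_shift rmorphM /= conjCK.
Qed.

Lemma sum_pcorr_sqr_seq (F : seq (pseq p)) :
  \sum_(f <- F) \sum_(g <- F) \sum_s `|pcorr f g s| ^+ 2 =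
  \sum_t `|\sum_(f <- F) pcorr f f t| ^+ 2.
Proof.
transitivity (\sum_t \sum_(f <- F) \sum_(g <- F) pcorr f f t * (pcorr g g t)^*).
  symmetry; rewrite exchange_big /=; apply: eq_bigr => f _.
  by rewrite exchange_big /=; apply: eq_bigr => g _; rewrite sum_pcorr_sqr.
apply: eq_bigr => t _; rewrite normCK rmorph_sum big_distrl /=.
by apply: eq_bigr => f _; rewrite big_distrr.
Qed.

Lemma PCDF_const_energy (F : seq (pseq p)) (E : algC) :
  (forall f, f \in F -> pcorr f f 0 = E) ->
  PCDF F = (\sum_t `|\sum_(f <- F) pcorr f f t| ^+ 2) / ((size F)%:R ^+ 2 * E ^+ 2).
Proof.
move=> energyE; rewrite /PCDF -sum_pcorr_sqr_seq.
have -> : \sum_(f <- F) \sum_(g <- F) PCDF2 f g =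
    (\sum_(f <- F) \sum_(g <- F) \sum_s `|pcorr f g s| ^+ 2) / E ^+ 2.
  rewrite big_distrl /=; apply: eq_big_seq => f f_in.
  rewrite big_distrl /=; apply: eq_big_seq => g g_in.
  by rewrite /PCDF2 !energyE // -expr2.
by rewrite mulrCA -invfM.
Qed.

End Correlation.

Section HadamardPlan.

Variables (n : nat) (D : seq (pattern n)).
Hypothesis D_plan : hadamard_plan D.

Let ones : pattern n := [ffun=> 1].

Definition plan_mx : 'M[algC]_n := \matrix_(i, k) nth ones (ones :: D) i k.

Lemma plan_mx_unitary : plan_mx *m (map_mx Num.conj plan_mx)^T = n%:R%:M.
Proof.
have [uniq_D size_D unimod_bal orth_D] := D_plan.
have nth_D (i : nat) : (i.+1 < n)%N -> nth ones D i \in D.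
  by move=> lt_i; rewrite mem_nth // size_D ltn_predRL.
have sum0 (d : pattern n) : d \in D -> \sum_k d k = 0 by move=> /unimod_bal[].
apply/matrixP => i j; rewrite !mxE; under eq_bigr do rewrite !mxE.
rewrite -val_eqE; case: i j => [[|i] lt_i] [[|j] lt_j] /=.
- under eq_bigr do rewrite ffunE conjC1 mulr1.
  by rewrite sumr_const card_ord.
- under eq_bigr do rewrite ffunE mul1r.
  by rewrite -rmorph_sum sum0 ?nth_D // rmorph0.
- under eq_bigr do rewrite ffunE conjC1 mulr1.
  by rewrite sum0 ?nth_D.
- have [-> | neq_ij] := eqVneq i j.
    have [unimod _] := unimod_bal _ (nth_D _ lt_j).
    under eq_bigr do rewrite -normCK unimod expr1n.
    by rewrite sumr_const card_ord eqxx.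
  rewrite eqSS (negbTE neq_ij); apply: orth_D; rewrite ?nth_D //.
  by rewrite nth_uniq ?size_D ?ltn_predRL.
Qed.

Lemma hadamard_plan_col_dot (k l : 'I_n) :
  \sum_(d <- D) d k * (d l)^* = n%:R * (k == l)%:R - 1.
Proof.
have [_ size_D _ _] := D_plan.
have n_gt0 : (0 < n)%N := leq_ltn_trans (leq0n k) (ltn_ord k).
have n_nz : (n%:R : algC) != 0 by rewrite pnatr_eq0 -lt0n.
have inv_plan : plan_mx *m (n%:R^-1 *: (map_mx Num.conj plan_mx)^T) = 1%:M.
  by rewrite -scalemxAr plan_mx_unitary scale_scalar_mx mulVf.
have sum_rows (G : pattern n -> algC) :
    \sum_(x <- ones :: D) G x = \sum_(i < n) G (nth ones (ones :: D) i).
  by rewrite (big_nth ones) /= size_D (prednK n_gt0) big_mkord.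
have := congr1 (fun A : 'M_n => A l k) (mulmx1C inv_plan).
rewrite -scalemxAl !mxE; under eq_bigr do rewrite !mxE.
rewrite -(sum_rows (fun x => (x l)^* * x k)) big_cons !ffunE conjC1 mul1r eq_sym.
move=> /(canRL (mulVKf n_nz)) <-; rewrite [1 + _]addrC addrK.
by apply: eq_bigr => d _; rewrite mulrC.
Qed.

End HadamardPlan.

Section CyclotomicCodebook.

Variables (p n : nat) (alpha : 'F_p).
Hypotheses (p_pr : prime p) (alpha_prim : (p.-1).-primitive_root alpha).
Hypotheses (n_gt0 : (0 < n)%N) (n_dvd : (n %| p.-1)%N).

(* [dlog 0 = 0] is a junk value. *)
Definition dlog (x : 'F_p) : nat :=
  oapp val 0%N [pick i : 'I_p.-1 | alpha ^+ i == x].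

Definition cyc_index (x : 'F_p) : nat := (dlog x %% n)%N.

Definition cyc_ord (x : 'F_p) : 'I_n := Ordinal (ltn_pmod (dlog x) n_gt0).

Lemma prim_root_Fp_neq0 : alpha != 0.
Proof. by rewrite (prim_root_eq0 alpha_prim) -lt0n -subn1 subn_gt0 prime_gt1. Qed.

Lemma dlogK x : x != 0 -> alpha ^+ dlog x = x.
Proof.
move=> x_nz; rewrite /dlog; case: pickP => [i /eqP // | no_log].
have := expf_card_pred x_nz; rewrite card_Fp // => x_unity.
by have [i x_def] := prim_rootP alpha_prim x_unity; have := no_log i; rewrite x_def eqxx.
Qed.

Lemma cyc_index_exp k : cyc_index (alpha ^+ k) = (k %% n)%N.
Proof.
have /eqP := dlogK (expf_neq0 k prim_root_Fp_neq0).
rewrite (eq_prim_root_expr alpha_prim) => /eqP log_eq.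
by rewrite /cyc_index -(modn_dvdm _ n_dvd) log_eq modn_dvdm.
Qed.

Lemma cyc_indexM x y : x != 0 -> y != 0 ->
  cyc_index (x * y) = ((cyc_index x + cyc_index y) %% n)%N.
Proof.
move=> x_nz y_nz; rewrite -(dlogK x_nz) -(dlogK y_nz) -exprD.
by rewrite !cyc_index_exp modnDm.
Qed.

Lemma cyc_index1 : cyc_index 1 = 0%N.
Proof. by rewrite -(expr0 alpha) cyc_index_exp mod0n. Qed.

Lemma cyc_index_lt x : (cyc_index x < n)%N.
Proof. exact: ltn_pmod. Qed.

Lemma cyc_classE h : h != 0 -> cyc_class n alpha h = Some (cyc_ord h).
Proof.
move=> h_nz.
have in_class (k : 'I_n) :
    [exists y, (y != 0) && (h == alpha ^+ k * y ^+ n)] = (k == cyc_ord h).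
  rewrite -val_eqE /=; apply/existsP/eqP => [[y /andP[y_nz /eqP ->]] | k_def].
    rewrite -/(cyc_index _) cyc_indexM ?expf_neq0 ?prim_root_Fp_neq0 //.
    rewrite -(dlogK y_nz) -exprM !cyc_index_exp modnMl addn0.
    by rewrite !modn_small.
  exists (alpha ^+ (dlog h %/ n)); rewrite expf_neq0 ?prim_root_Fp_neq0 //=.
  by rewrite -exprM -exprD k_def addnC -divn_eq dlogK.
rewrite /cyc_class; case: pickP => [k | no_class]; first by rewrite in_class => /eqP ->.
by have := no_class (cyc_ord h); rewrite in_class eqxx.
Qed.

Lemma cyc_index_div x y : x != 0 -> y != 0 ->
  (cyc_index x == cyc_index y) = (cyc_index (x / y) == 0%N).
Proof.
move=> x_nz y_nz; rewrite -{1}(divfK y_nz x).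
rewrite (@cyc_indexM (x / y) y) ?mulf_neq0 ?invr_eq0 //.
have := eqn_modDr (cyc_index y) (cyc_index (x / y)) 0 n.
rewrite add0n mod0n (modn_small (cyc_index_lt y)) (modn_small (cyc_index_lt (x / y))).
by move=> ->.
Qed.

Lemma card_cyc_class k : (k < n)%N ->
  (\sum_(t : 'F_p | t != 0%R) (cyc_index t == k) =
   \sum_(t : 'F_p | t != 0%R) (cyc_index t == 0))%N.
Proof.
move=> lt_kn; have ak_nz := expf_neq0 k prim_root_Fp_neq0.
rewrite (reindex_inj (mulfI ak_nz)) /=.
apply: eq_big => [t | t]; rewrite mulf_eq0 (negbTE ak_nz) //= => t_nz.
rewrite -[X in _ == X](modn_small lt_kn) -cyc_index_exp.
by rewrite cyc_index_div ?mulf_neq0 // [alpha ^+ k * t]mulrC mulfK.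
Qed.

Lemma card_cyc_class0 :
  ((\sum_(t : 'F_p | t != 0%R) (cyc_index t == 0)) * n = p.-1)%N.
Proof.
have := cardC1 (0 : 'F_p); rewrite card_Fp // => <-; rewrite -sum1_card.
transitivity (\sum_(k < n) \sum_(t : 'F_p | t != 0%R) (cyc_index t == k))%N.
  rewrite (eq_bigr _ (fun k _ => card_cyc_class (ltn_ord k))).
  by rewrite sum_nat_const card_ord mulnC.
rewrite exchange_big /=; apply: eq_big => [// | t _].
rewrite (bigD1 (cyc_ord t)) //= eqxx big1 // => k.
by rewrite -[cyc_index t]/(val (cyc_ord t)) val_eqE eq_sym => /negbTE ->.
Qed.

Lemma seq_of_patternE (d : pattern n) h :
  seq_of_pattern alpha d h = if h == 0 then 0 else d (cyc_ord h).
Proof. by rewrite ffunE; case: eqP => // /eqP h_nz; rewrite cyc_classE. Qed.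

Lemma seq_of_pattern_inj : injective (@seq_of_pattern p n alpha).
Proof.
move=> d e de; apply/ffunP => k.
have := congr1 (fun f : pseq p => f (alpha ^+ k)) de.
rewrite !seq_of_patternE expf_eq0 (negbTE prim_root_Fp_neq0) andbF.
suff -> : cyc_ord (alpha ^+ k) = k by [].
by apply/val_inj; rewrite /= -/(cyc_index _) cyc_index_exp modn_small.
Qed.

Section Codebook.

Variable D : seq (pattern n).
Hypothesis D_plan : hadamard_plan D.

Local Notation pseq_of d := (seq_of_pattern alpha d).

Lemma pcorr_seq_of_pattern0 (d : pattern n) :
  unimodular d -> pcorr (pseq_of d) (pseq_of d) 0 = (p.-1)%:R.
Proof.
move=> d_unimod.
transitivity (\sum_(j : 'F_p | j != 0) (1 : algC)); last first.
  by rewrite sum_nonzero_const card_Fp.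
rewrite big_mkcond /pcorr; apply: eq_bigr => j _; rewrite addr0 seq_of_patternE.
by case: eqP => _; rewrite ?mul0r // -normCK d_unimod expr1n.
Qed.

Lemma sum_pcorr_plan s :
  \sum_(d <- D) pcorr (pseq_of d) (pseq_of d) s =
  \sum_(j | (j != 0) && (j + s != 0))
     (n%:R * (cyc_index (j + s) == cyc_index j)%:R - 1).
Proof.
rewrite /pcorr exchange_big /= [RHS]big_mkcond; apply: eq_bigr => j _.
under eq_bigr do rewrite !seq_of_patternE.
have [-> | j_nz] := eqVneq j 0; first by rewrite /= big1 // => d _; rewrite conjC0 mulr0.
have [-> | js_nz] := eqVneq (j + s) 0; first by rewrite /= big1 // => d _; rewrite mul0r.
by rewrite hadamard_plan_col_dot // -val_eqE.
Qed.

Lemma sum_pcorr_plan0 :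
  \sum_(d <- D) pcorr (pseq_of d) (pseq_of d) 0 = ((n - 1) * (p - 1))%N%:R.
Proof.
rewrite sum_pcorr_plan; under eq_bigl do rewrite addr0 andbb.
under eq_bigr do rewrite addr0 eqxx mulr1.
by rewrite sum_nonzero_const card_Fp // natrM natrB // subn1 mulr_natr.
Qed.

Lemma sum_pcorr_plan_neq0 s : s != 0 ->
  \sum_(d <- D) pcorr (pseq_of d) (pseq_of d) s = 1 - n%:R.
Proof.
move=> s_nz; rewrite sum_pcorr_plan sumrB -mulr_sumr.
under eq_bigr => j /andP[j_nz js_nz] do rewrite cyc_index_div //.
rewrite (sum_shift_div (fun t => (cyc_index t == 0%N)%:R) s_nz).
have := congr1 (fun m => m%:R : algC) card_cyc_class0.
rewrite natrM natr_sum (bigD1 1) ?oner_neq0 //= cyc_index1 eqxx => class0.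
have pairs : \sum_(j | (j != 0) && (j + s != 0)) (1 : algC) = (p.-1)%:R - 1.
  have := sum_nonzero_const 'F_p (1 : algC); rewrite card_Fp // => <-.
  under eq_bigl do rewrite addr_eq0.
  by rewrite [X in _ = X - 1](bigD1 (- s)) ?oppr_eq0 //= [1 + _]addrC addrK.
by rewrite pairs -class0 /=; ring.
Qed.

Lemma sum_pcorr_planE s :
  \sum_(d <- D) pcorr (pseq_of d) (pseq_of d) s =
  if s == 0 then ((n - 1) * (p - 1))%N%:R else 1 - n%:R.
Proof.
by case: eqP => [-> | /eqP s_nz]; [exact: sum_pcorr_plan0 | exact: sum_pcorr_plan_neq0].
Qed.

Lemma codebook_plan : codebook alpha D = [seq pseq_of d | d <- D].
Proof.
have [uniq_D _ _ _] := D_plan.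
by rewrite /codebook undup_id // (map_inj_uniq seq_of_pattern_inj).
Qed.

Lemma codebook_energy f : f \in codebook alpha D -> pcorr f f 0 = (p.-1)%:R.
Proof.
have [_ _ unimod_bal _] := D_plan.
rewrite codebook_plan => /mapP[d d_in ->].
by apply: pcorr_seq_of_pattern0; have [] := unimod_bal d d_in.
Qed.

End Codebook.

End CyclotomicCodebook.

Theorem mainTheorem9 (n p : nat) (D : seq (pattern n)) (alpha : 'F_p) :
  (1 < n)%N -> hadamard_plan D -> prime p -> p = 1 %[mod n] ->
  (p.-1).-primitive_root alpha ->
  let F := codebook alpha D in
  let S := fun s : 'F_p => \sum_(f <- F) pcorr f f s in
  [/\ (forall s : 'F_p,
         S s = if s == 0 then ((n - 1) * (p - 1))%N%:R else 1 - n%:R),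
      \sum_(s : 'F_p | s != 0) `|S s| ^+ 2 = ((p - 1) * (n - 1) ^ 2)%N%:R,
      \sum_(s : 'F_p) `|S s| ^+ 2 = (p * (p - 1) * (n - 1) ^ 2)%N%:R
    & PCDF F = p%:R / (p - 1)%N%:R].
Proof.
move=> n_gt1 D_plan p_pr p_mod alpha_prim F S.
have n_gt0 : (0 < n)%N := ltnW n_gt1.
have n_dvd : (n %| p.-1)%N by rewrite -subn1 -eqn_mod_dvd ?prime_gt0 //; apply/eqP.
have S_val s : S s = if s == 0 then ((n - 1) * (p - 1))%N%:R else 1 - n%:R.
  by rewrite /S /F codebook_plan // big_map sum_pcorr_planE.
have S_sqr s : s != 0 -> `|S s| ^+ 2 = ((n - 1) ^ 2)%N%:R.
  move=> s_nz; rewrite S_val (negbTE s_nz) -opprB normrN -(natrB _ n_gt0).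
  by rewrite normr_nat natrX.
have sum_nz : \sum_(s | s != 0) `|S s| ^+ 2 = ((p - 1) * (n - 1) ^ 2)%N%:R.
  by rewrite (eq_bigr _ S_sqr) sum_nonzero_const card_Fp // natrM !subn1 mulr_natl.
have sum_all : \sum_s `|S s| ^+ 2 = (p * (p - 1) * (n - 1) ^ 2)%N%:R.
  rewrite (bigD1 0) //= sum_nz S_val eqxx normr_nat -natrX -natrD; congr _%:R.
  case: (p) (prime_gt0 p_pr) => // q _; rewrite subSS subn0.
  by move: (n - 1)%N => a; ring.
split => //.
rewrite (PCDF_const_energy (codebook_energy p_pr alpha_prim n_gt0 n_dvd D_plan)).
rewrite -/F -/S sum_all /F codebook_plan // size_map.
have [_ size_D _ _] := D_plan.
have p1_nz : ((p - 1)%N%:R : algC) != 0 by rewrite pnatr_eq0 subn_eq0 -ltnNge prime_gt1.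
have n1_nz : ((n - 1)%N%:R : algC) != 0 by rewrite pnatr_eq0 subn_eq0 -ltnNge.
by rewrite size_D -!subn1 !natrM; field; rewrite p1_nz n1_nz.
Qed.
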